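(* The Lie algebra $\Lambda(\mathbb{Q}\mathrm{Par})$ is not finitely generated.
   Context: The nonsymmetric operad of partitions $\mathrm{Par}$: $\mathrm{Par}((1))=\{1\}$, and for $m\ge2$, $\mathrm{Par}((m))$ is the set of monomials $\prod_{i=1}^Nx_i^{a_i}$ with $N\ge2$, all $a_i\ge1$, $\sum a_i=m$ (nontrivial order-preserving partitions of $\{1,\dots,m\}$ into consecutive blocks). Partial composition: if $a_1+\dots+a_{l-1}+1\le s\le a_1+\dots+a_l$, then $\left(\prod_{i=1}^Nx_i^{a_i}\right)\circ_s\left(\prod_{k=1}^{N_s}x_k^{b_k}\right)=x_l^{a_l-1+\sum_kb_k}\prod_{i\ne l}x_i^{a_i}$; $1$ is a two-sided unit. $\Lambda(\mathbb{Q}\mathrm{Par})=\bigoplus_{m\ge1}\mathbb{Q}\mathrm{Par}((m))$ with Lie bracket $[c,d]=\sum_{t=1}^{j}d\circ_tc-\sum_{s=1}^{k}c\circ_sd$ for $c\in\mathrm{Par}((k))$, $d\in\mathrm{Par}((j))$, extended bilinearly. *)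

From HB Require Import structures.
From mathcomp Require Import all_boot all_algebra.
From mathcomp Require Import finmap.
From mathcomp Require monalg.
Import monalg.

Set Implicit Arguments.
Unset Strict Implicit.
Unset Printing Implicit Defensive.

Import GRing.Theory.
Local Open Scope ring_scope.

(* A monomial prod_{i=1}^N x_i^{a_i} is encoded by its exponent sequence
   [:: a_1; ...; a_N].  The unit 1 of Par((1)) is encoded by [:: 1]. *)
Definition par_valid (a : seq nat) : bool :=
  (a == [:: 1%N]) || ((1 < size a)%N && all (fun x => 0 < x)%N a).

Definition Par := {a : seq nat | par_valid a}.
HB.instance Definition _ := [isSub for (@sval (seq nat) (fun a => par_valid a))].
HB.instance Definition _ := [Choice of Par by <:].

Definition par_unit : Par := exist _ [:: 1%N] (erefl true).

Definition arity (c : Par) : nat := sumn (val c).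

(* replace the exponent a_l of the block containing position s (1-based)
   by a_l - 1 + j *)
Fixpoint ins_block (a : seq nat) (s j : nat) : seq nat :=
  match a with
  | [::] => [::]
  | x :: a' => if (s <= x)%N then (x - 1 + j)%N :: a' else x :: ins_block a' (s - x) j
  end.

(* partial composition on exponent sequences; 1 is a two-sided unit *)
Definition pcomp_seq (c : seq nat) (s : nat) (d : seq nat) : seq nat :=
  if c == [:: 1%N] then d else ins_block c s (sumn d).

(* partial composition c o_s d in Par (s ranging over 1..arity c); the result
   is always valid for 1 <= s <= arity c, the default is never used there. *)
Definition pcomp (c : Par) (s : nat) (d : Par) : Par :=
  insubd par_unit (pcomp_seq (val c) s (val d)).

Definition QPar := {malg rat[Par]}.

Definition bracket_basis (c d : Par) : QPar :=
  \sum_(1 <= t < (arity d).+1) << pcomp d t c >>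
  - \sum_(1 <= s < (arity c).+1) << pcomp c s d >>.

Definition bracket (x y : QPar) : QPar :=
  \sum_(c <- msupp x) \sum_(d <- msupp y) (x@_c * y@_d) *: bracket_basis c d.

Inductive lie_generated (S : seq QPar) : QPar -> Prop :=
| lg_base x : x \in S -> lie_generated S x
| lg_zero : lie_generated S 0
| lg_add x y : lie_generated S x -> lie_generated S y -> lie_generated S (x + y)
| lg_scale (a : rat) x : lie_generated S x -> lie_generated S (a *: x)
| lg_bracket x y : lie_generated S x -> lie_generated S y ->
    lie_generated S (bracket x y).

Definition lie_finitely_generated : Prop :=
  exists S : seq QPar, forall x : QPar, lie_generated S x.

From Pilot Require Import Defs.
From mathcomp Require Import all_boot all_algebra.
From mathcomp Require Import finmap.
From mathcomp Require monalg.
Import monalg.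
Import GRing.Theory.
Local Open Scope ring_scope.

(* Partial composition never increases the number of blocks: c o_s d has as
   many blocks as c, or as d when c is the unit.  Hence the Lie subalgebra
   generated by finitely many elements is spanned by partitions with at most
   M blocks for some M, and misses the partition of M+1 into singletons. *)

Lemma size_ins_block (a : seq nat) (s j : nat) : size (ins_block a s j) = size a.
Proof. by elim: a s => [|x a IHa] s //=; case: ifP => _ //=; rewrite IHa. Qed.

Lemma size_par_gt0 (c : Par) : (0 < size (val c))%N.
Proof. by case: c => a /= /orP[/eqP -> // | /andP[/ltnW]]. Qed.

Lemma size_pcomp (c d : Par) (s : nat) :
  (size (val (Defs.pcomp c s d)) <= maxn (size (val c)) (size (val d)))%N.
Proof.
rewrite /Defs.pcomp /insubd.
case: insubP => [u _ -> | _] /=; last by rewrite leq_max size_par_gt0.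
rewrite /pcomp_seq; case: ifP => _; last by rewrite size_ins_block leq_maxl.
exact: leq_maxr.
Qed.

Definition blocks_le (M : nat) (x : QPar) : Prop :=
  forall c : Par, (M < size (val c))%N -> x@_c = 0.

Section BlocksLe.

Variable M : nat.

Lemma blocks_leP (x : QPar) :
  blocks_le M x -> forall c, c \in msupp x -> (size (val c) <= M)%N.
Proof.
move=> Mx c cx; rewrite leqNgt; apply/negP => /Mx /eqP.
by rewrite mcoeff_eq0 cx.
Qed.

Lemma blocks_le0 : blocks_le M 0.
Proof. by move=> c _; rewrite mcoeff0. Qed.

Lemma blocks_leD (x y : QPar) :
  blocks_le M x -> blocks_le M y -> blocks_le M (x + y).
Proof. by move=> Mx My c Mc; rewrite mcoeffD Mx ?My ?addr0. Qed.

Lemma blocks_leZ (a : rat) (x : QPar) : blocks_le M x -> blocks_le M (a *: x).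
Proof. by move=> Mx c Mc; rewrite mcoeffZ Mx ?mulr0. Qed.

Lemma blocks_le_bracket_basis (c d : Par) :
  (size (val c) <= M)%N -> (size (val d) <= M)%N ->
  blocks_le M (bracket_basis c d).
Proof.
move=> Mc Md e Me.
have pcomp_small (f g : Par) t : (size (val f) <= M)%N -> (size (val g) <= M)%N ->
    (<< Defs.pcomp f t g >> : QPar)@_e = 0.
  move=> Mf Mg; rewrite mcoeffU; case: eqP => // fge.
  have fgM : (maxn (size (val f)) (size (val g)) <= M)%N by rewrite geq_max Mf Mg.
  by have := leq_trans (size_pcomp f g t) fgM; rewrite fge leqNgt Me.
by rewrite mcoeffB !raddf_sum !big1 ?subr0 // => t _ /=; rewrite pcomp_small ?oppr0.
Qed.

Lemma blocks_le_bracket (x y : QPar) :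
  blocks_le M x -> blocks_le M y -> blocks_le M (bracket x y).
Proof.
move=> Mx My e Me; rewrite raddf_sum big1_seq // => c /andP[_ cx].
rewrite raddf_sum big1_seq // => d /andP[_ dy].
have Mbb := blocks_le_bracket_basis c d (blocks_leP _ Mx _ cx) (blocks_leP _ My _ dy).
by rewrite /= mcoeffZ Mbb ?mulr0.
Qed.

Lemma lie_generated_blocks_le (S : seq QPar) (x : QPar) :
  (forall s, s \in S -> blocks_le M s) -> lie_generated S x -> blocks_le M x.
Proof.
move=> MS; elim=> {x} [x /MS | | x y _ Mx _ My | a x _ Mx | x y _ Mx _ My] //.
- exact: blocks_le0.
- exact: blocks_leD.
- exact: blocks_leZ.
- exact: blocks_le_bracket.
Qed.

End BlocksLe.

Definition max_blocks (x : QPar) : nat := \max_(c <- msupp x) size (val c).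

Lemma blocks_le_max_blocks (x : QPar) : blocks_le (max_blocks x) x.
Proof.
move=> c Mc; apply: mcoeff_outdom; apply: contraTN Mc => cx; rewrite -leqNgt.
exact: (@leq_bigmax_seq _ _ xpredT (fun c : Par => size (val c))).
Qed.

Lemma blocks_le_leq (M N : nat) (x : QPar) :
  (M <= N)%N -> blocks_le M x -> blocks_le N x.
Proof. by move=> MN Mx c Nc; apply: Mx; apply: leq_ltn_trans Nc. Qed.

Lemma par_valid_ones (n : nat) : par_valid (nseq n.+2 1%N).
Proof. by rewrite /par_valid size_nseq all_nseq orbT. Qed.

Definition ones_par (n : nat) : Par := exist par_valid _ (par_valid_ones n).

Lemma not_blocks_le_ones (n : nat) : ~ blocks_le n.+1 << ones_par n >>.
Proof.
move/(_ (ones_par n)); rewrite mcoeffUU /= size_nseq ltnSn => /(_ isT).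
by apply/eqP; rewrite oner_eq0.
Qed.

Theorem proposition6p4 : ~ lie_finitely_generated.
Proof.
case=> S genS.
pose M := \max_(x <- S) max_blocks x.
have MS s : s \in S -> blocks_le M.+1 s.
  move=> sS; apply: blocks_le_leq (blocks_le_max_blocks s).
  exact: leqW (@leq_bigmax_seq _ _ xpredT max_blocks s sS isT).
apply: (not_blocks_le_ones M).
exact: lie_generated_blocks_le MS (genS _).
Qed.
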